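(* Let $m\le n$, $a>0$, $\lambda>0$, let $\mathscr{A}:\mathbb{R}^{m\times n}\to\mathbb{R}^p$ be linear with $\mathscr{A}(X)=A\,\mathrm{vec}(X)$ for $A\in\mathbb{R}^{p\times mn}$, $b\in\mathbb{R}^p$, and $0<\mu<\|A\|_2^{-2}$. If $X^*$ is a global minimizer of $\frac12\|\mathscr{A}(X)-b\|_2^2+\lambda T(X)$ over $X\in\mathbb{R}^{m\times n}$, then $$X^*=G_{\lambda\mu,a}(B_\mu(X^* )).$$ Equivalently, if $B_\mu(X^* )=U\,\mathrm{Diag}(\sigma^*_b)V^T$ is an SVD, then $X^*=U\,\mathrm{Diag}(g_{\lambda\mu,a}(\sigma^*_{b,1}),\dots,g_{\lambda\mu,a}(\sigma^*_{b,m}))V^T$.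
   Context: $\mathrm{vec}(X)$ stacks columns; $\|A\|_2$ is the spectral norm; $\mathscr{A}^*$ is the adjoint of $\mathscr{A}$ for the Frobenius inner product. $\rho_a(x)=\frac{(a+1)x}{a+x}$, $T(X)=\sum_{i=1}^{\mathrm{rank}(X)}\rho_a(\sigma_i(X))$ over singular values. $B_\mu(Z)=Z+\mu\mathscr{A}^*(b-\mathscr{A}(Z))$. For $\lambda'>0$: $h_{\lambda'}(x)=\mathrm{sgn}(x)\{\frac23(a+|x|)\cos(\varphi(x)/3)-\frac{2a}{3}+\frac{|x|}{3}\}$ with $\varphi(x)=\arccos(1-\frac{27\lambda' a(a+1)}{2(a+|x|)^3})$ and $\mathrm{sgn}(0)=0$; threshold $t=\lambda'\frac{a+1}{a}$ if $\lambda'\le\frac{a^2}{2(a+1)}$ and $t=\sqrt{2\lambda'(a+1)}-\frac a2$ otherwise; $g_{\lambda',a}(w)=0$ if $|w|\le t$, $h_{\lambda'}(w)$ if $|w|>t$; and for $Y$ with SVD $Y=U\mathrm{Diag}(\sigma)V^T$, $G_{\lambda',a}(Y)=U\,\mathrm{Diag}(g_{\lambda',a}(\sigma_1),\dots,g_{\lambda',a}(\sigma_m))V^T$. *)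

From Stdlib Require Import Reals Lra Lia ClassicalEpsilon.
Open Scope R_scope.

(* Matrices are functions nat -> nat -> R; only entries in range matter. *)

Fixpoint rsum (f : nat -> R) (n : nat) : R :=
  match n with O => 0 | S k => rsum f k + f k end.

Definition vnorm (q : nat) (v : nat -> R) : R := sqrt (rsum (fun k => v k ^ 2) q).

Definition matvec (p q : nat) (A : nat -> nat -> R) (v : nat -> R) : nat -> R :=
  fun r => rsum (fun k => A r k * v k) q.

Definition is_spectral_norm (p q : nat) (A : nat -> nat -> R) (s : R) : Prop :=
  is_lub (fun r => exists v, vnorm q v = 1 /\ r = vnorm p (matvec p q A v)) s.

(* vec(X) of an m x n matrix, stacking columns: vec(X)_(i + m*j) = X i j *)
Definition vecm (m n : nat) (X : nat -> nat -> R) : nat -> R :=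
  fun k => X (k mod m)%nat (k / m)%nat.

Definition calA (m n p : nat) (A : nat -> nat -> R) (X : nat -> nat -> R) : nat -> R :=
  matvec p (m * n) A (vecm m n X).

(* adjoint of calA for the Frobenius inner product: calA^*(y) = mat(A^T y),
   i.e. entry (i,j) is (A^T y)_(i + m*j) *)
Definition calA_adj (m n p : nat) (A : nat -> nat -> R) (y : nat -> R) : nat -> nat -> R :=
  fun i j => rsum (fun r => A r (i + m * j)%nat * y r) p.

Definition is_svd (m n : nat) (Y : nat -> nat -> R)
    (U : nat -> nat -> R) (s : nat -> R) (V : nat -> nat -> R) : Prop :=
  (forall k l, (k < m)%nat -> (l < m)%nat ->
     rsum (fun i => U i k * U i l) m = (if Nat.eq_dec k l then 1 else 0)) /\
  (forall k l, (k < m)%nat -> (l < m)%nat ->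
     rsum (fun j => V j k * V j l) n = (if Nat.eq_dec k l then 1 else 0)) /\
  (forall k, (k < m)%nat -> 0 <= s k) /\
  (forall k, (S k < m)%nat -> s (S k) <= s k) /\
  (forall i j, (i < m)%nat -> (j < n)%nat ->
     Y i j = rsum (fun k => U i k * s k * V j k) m).

(* singular values sigma_1 >= ... >= sigma_m (indexed 0..m-1), chosen via an SVD *)
Definition singvals (m n : nat) (X : nat -> nat -> R) : nat -> R :=
  epsilon (inhabits (fun _ : nat => 0))
    (fun s => exists U V, is_svd m n X U s V).

Fixpoint count_nz (s : nat -> R) (k : nat) : nat :=
  match k with
  | O => O
  | S k' => (count_nz s k' + (if Req_EM_T (s k') 0 then 0 else 1))%nat
  end.
Definition rankm (m n : nat) (X : nat -> nat -> R) : nat := count_nz (singvals m n X) m.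

Definition rho (a x : R) : R := (a + 1) * x / (a + x).

Definition Tfun (a : R) (m n : nat) (X : nat -> nat -> R) : R :=
  rsum (fun i => rho a (singvals m n X i)) (rankm m n X).

Definition objective (a lam : R) (m n p : nat) (A : nat -> nat -> R) (b : nat -> R)
    (X : nat -> nat -> R) : R :=
  / 2 * rsum (fun r => (calA m n p A X r - b r) ^ 2) p + lam * Tfun a m n X.

Definition Bmu (mu : R) (m n p : nat) (A : nat -> nat -> R) (b : nat -> R)
    (Z : nat -> nat -> R) : nat -> nat -> R :=
  fun i j => Z i j + mu * calA_adj m n p A (fun r => b r - calA m n p A Z r) i j.

Definition sgn (x : R) : R := if Rlt_dec 0 x then 1 else if Rlt_dec x 0 then -1 else 0.

Definition phi (lam' a x : R) : R :=
  acos (1 - 27 * lam' * a * (a + 1) / (2 * (a + Rabs x) ^ 3)).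

Definition hfun (lam' a x : R) : R :=
  sgn x * (2 / 3 * (a + Rabs x) * cos (phi lam' a x / 3) - 2 * a / 3 + Rabs x / 3).

Definition thresh (lam' a : R) : R :=
  if Rle_dec lam' (a ^ 2 / (2 * (a + 1))) then lam' * (a + 1) / a
  else sqrt (2 * lam' * (a + 1)) - a / 2.

Definition gfun (lam' a w : R) : R :=
  if Rle_dec (Rabs w) (thresh lam' a) then 0 else hfun lam' a w.

(* Majorization-minimization.  Let F be the objective, r = A(Xs) - b and
   B = B_mu(Xs).  For every X,
     F(X) <= F(Xs) + <X - Xs, A^*(r)> + |X - Xs|^2 / (2 mu) + lam (T(X) - T(Xs))
             - (1 / mu - |A|^2) |X - Xs|^2 / 2,
   and mu times the first four terms is, up to a constant, the proximal objective
   |X - B|^2 / 2 + lam mu T(X).  By von Neumann's trace inequality this proximal problem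
   decouples over the singular values of B into the scalar problems
   min_(x >= 0) (x - s)^2 / 2 + lam mu rho_a(x), whose solution is g_(lam mu, a)(s); so
   Y = U Diag(g(s)) V^T minimizes it, whence F(Y) <= F(Xs) - (1 / mu - |A|^2) |Y - Xs|^2 / 2
   and the minimality of Xs forces Y = Xs.  Singular value decompositions are built from
   a variational eigenbasis of X X^T, and their uniqueness, also from von Neumann's
   inequality, makes T independent of the chosen decomposition. *)

From Stdlib Require Import Reals Lra Lia Psatz ClassicalEpsilon.
From mathcomp Require ssreflect ssrbool eqtype ssrnat fintype bigop ssralg ssrnum matrix mxalgebra interval.
From mathcomp Require Rstruct Rstruct_topology boolp classical_sets topology normedtype derive.
Open Scope R_scope.
Set Bullet Behavior "Strict Subproofs".

Definition delta (k l : nat) : R := if Nat.eq_dec k l then 1 else 0.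

Lemma delta_sym k l : delta k l = delta l k.
Proof. unfold delta; destruct (Nat.eq_dec k l), (Nat.eq_dec l k); lia || reflexivity. Qed.

Lemma rsum_S (f : nat -> R) n : rsum f (S n) = rsum f n + f n.
Proof. reflexivity. Qed.

Lemma rsum_ext (f g : nat -> R) n :
  (forall i, (i < n)%nat -> f i = g i) -> rsum f n = rsum g n.
Proof.
induction n as [|n IH]; intros H; simpl; [reflexivity|].
rewrite IH, (H n); [reflexivity|lia|intros; apply H; lia].
Qed.

Lemma rsum_plus (f g : nat -> R) n : rsum (fun i => f i + g i) n = rsum f n + rsum g n.
Proof. induction n; simpl; [ring|rewrite IHn; ring]. Qed.

Lemma rsum_minus (f g : nat -> R) n : rsum (fun i => f i - g i) n = rsum f n - rsum g n.
Proof. induction n; simpl; [ring|rewrite IHn; ring]. Qed.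

Lemma rsum_scal_l (c : R) (f : nat -> R) n : rsum (fun i => c * f i) n = c * rsum f n.
Proof. induction n; simpl; [ring|rewrite IHn; ring]. Qed.

Lemma rsum_scal_r (c : R) (f : nat -> R) n : rsum (fun i => f i * c) n = rsum f n * c.
Proof. induction n; simpl; [ring|rewrite IHn; ring]. Qed.

Lemma rsum_zero (f : nat -> R) n : (forall i, (i < n)%nat -> f i = 0) -> rsum f n = 0.
Proof.
induction n; intros H; simpl; [reflexivity|].
rewrite IHn, H by (intros; try apply H; lia). ring.
Qed.

Lemma rsum_le (f g : nat -> R) n :
  (forall i, (i < n)%nat -> f i <= g i) -> rsum f n <= rsum g n.
Proof.
induction n; intros H; simpl; [lra|].
pose proof (H n ltac:(lia)). pose proof (IHn ltac:(intros; apply H; lia)). lra.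
Qed.

Lemma rsum_nonneg (f : nat -> R) n : (forall i, (i < n)%nat -> 0 <= f i) -> 0 <= rsum f n.
Proof.
intros H. rewrite <- (rsum_zero (fun _ => 0) n) by auto. apply rsum_le; auto.
Qed.

Lemma rsum_le_extend (f : nat -> R) n1 n2 :
  (n1 <= n2)%nat -> (forall i, (i < n2)%nat -> 0 <= f i) -> rsum f n1 <= rsum f n2.
Proof.
intros Hle Hf. induction Hle; [lra|].
simpl. pose proof (Hf m ltac:(lia)). pose proof (IHHle ltac:(intros; apply Hf; lia)). lra.
Qed.

Lemma rsum_const1 n : rsum (fun _ => 1) n = INR n.
Proof. induction n; [reflexivity|]. rewrite rsum_S, IHn, (S_INR n). reflexivity. Qed.

Lemma rsum_swap (f : nat -> nat -> R) n m :
  rsum (fun i => rsum (fun j => f i j) m) n = rsum (fun j => rsum (fun i => f i j) n) m.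
Proof.
induction n; simpl.
- symmetry; apply rsum_zero; auto.
- rewrite IHn, <- rsum_plus. reflexivity.
Qed.

Lemma rsum_mult (f g : nat -> R) n m :
  rsum f n * rsum g m = rsum (fun k => rsum (fun l => f k * g l) m) n.
Proof.
rewrite <- rsum_scal_r. apply rsum_ext. intros k _. rewrite <- rsum_scal_l. reflexivity.
Qed.

Lemma rsum_delta_l (f : nat -> R) m l : (l < m)%nat -> rsum (fun k => delta k l * f k) m = f l.
Proof.
induction m; intros H; [lia|simpl].
unfold delta at 2. destruct (Nat.eq_dec m l) as [->|Hne].
- rewrite rsum_zero; [ring|]. intros i Hi. unfold delta. destruct (Nat.eq_dec i l); [lia|ring].
- rewrite IHm by lia. ring.
Qed.

Lemma rsum_delta_r (f : nat -> R) m l : (l < m)%nat -> rsum (fun k => delta l k * f k) m = f l.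
Proof.
intros H. rewrite <- (rsum_delta_l f m l H). apply rsum_ext. intros i _. rewrite delta_sym. reflexivity.
Qed.

Lemma rsum_split (f : nat -> R) a b :
  rsum f (a + b) = rsum f a + rsum (fun i => f (a + i)%nat) b.
Proof.
induction b; simpl.
- rewrite Nat.add_0_r. ring.
- rewrite Nat.add_succ_r. simpl. rewrite IHb. ring.
Qed.

Lemma rsum_blocks (f : nat -> R) m n :
  rsum f (m * n) = rsum (fun j => rsum (fun i => f (i + m * j)%nat) m) n.
Proof.
induction n; simpl.
- rewrite Nat.mul_0_r. reflexivity.
- replace (m * S n)%nat with (m * n + m)%nat by lia.
  rewrite rsum_split, IHn. f_equal. apply rsum_ext. intros i _. f_equal. lia.
Qed.

Lemma sqr_le_rsum (v : nat -> R) q i : (i < q)%nat -> v i * v i <= rsum (fun j => v j * v j) q.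
Proof.
intros Hi. apply Rle_trans with (rsum (fun j => v j * v j) (S i)).
- simpl. pose proof (rsum_nonneg (fun j => v j * v j) i ltac:(intros; apply Rle_0_sqr)). lra.
- apply rsum_le_extend; [lia|intros; apply Rle_0_sqr].
Qed.

Lemma rsum_sqr_eq0 (v : nat -> R) n :
  rsum (fun i => v i * v i) n <= 0 -> forall i, (i < n)%nat -> v i = 0.
Proof. intros H i Hi. pose proof (sqr_le_rsum v n i Hi). nra. Qed.

Lemma rsum_abel (s x : nat -> R) N :
  rsum (fun k => s k * x k) N =
  rsum (fun p => (s p - s (S p)) * rsum x (S p)) N + s N * rsum x N.
Proof. induction N; simpl in *; [ring|rewrite IHN; ring]. Qed.

(** * Frobenius products and von Neumann's trace inequality *)

Definition frob (m n : nat) (X Y : nat -> nat -> R) : R :=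
  rsum (fun i => rsum (fun j => X i j * Y i j) n) m.

Definition svd_mx (r : nat) (U : nat -> nat -> R) (d : nat -> R) (V : nat -> nat -> R) :
  nat -> nat -> R := fun i j => rsum (fun k => U i k * d k * V j k) r.

Definition orthonormal_cols (q r : nat) (U : nat -> nat -> R) : Prop :=
  forall k l, (k < r)%nat -> (l < r)%nat -> rsum (fun i => U i k * U i l) q = delta k l.

Definition nonincr_nonneg (m : nat) (s : nat -> R) : Prop :=
  (forall k, (S k < m)%nat -> s (S k) <= s k) /\ (forall k, (k < m)%nat -> 0 <= s k).

Lemma frob_ext m n X X' Y Y' :
  (forall i j, (i < m)%nat -> (j < n)%nat -> X i j = X' i j) ->
  (forall i j, (i < m)%nat -> (j < n)%nat -> Y i j = Y' i j) ->
  frob m n X Y = frob m n X' Y'.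
Proof.
intros HX HY. unfold frob. apply rsum_ext; intros i Hi; apply rsum_ext; intros j Hj.
rewrite HX, HY by auto. reflexivity.
Qed.

Lemma frob_sym m n X Y : frob m n X Y = frob m n Y X.
Proof. unfold frob. apply rsum_ext; intros; apply rsum_ext; intros; ring. Qed.

Lemma frob_scal_r m n X Z (c : R) : frob m n X (fun i j => c * Z i j) = c * frob m n X Z.
Proof.
unfold frob. rewrite <- rsum_scal_l. apply rsum_ext; intros.
rewrite <- rsum_scal_l. apply rsum_ext; intros. ring.
Qed.

Lemma frob_sqr_add m n X Z :
  frob m n (fun i j => X i j + Z i j) (fun i j => X i j + Z i j)
  = frob m n X X + 2 * frob m n X Z + frob m n Z Z.
Proof.
unfold frob. rewrite <- rsum_scal_l, <- !rsum_plus. apply rsum_ext; intros.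
rewrite <- rsum_scal_l, <- !rsum_plus. apply rsum_ext; intros. ring.
Qed.

Lemma frob_sqr_sub m n X Z :
  frob m n (fun i j => X i j - Z i j) (fun i j => X i j - Z i j)
  = frob m n X X - 2 * frob m n X Z + frob m n Z Z.
Proof.
unfold frob. rewrite <- rsum_scal_l, <- rsum_minus, <- rsum_plus. apply rsum_ext; intros.
rewrite <- rsum_scal_l, <- rsum_minus, <- rsum_plus. apply rsum_ext; intros. ring.
Qed.

Lemma frob_nonneg m n X : 0 <= frob m n X X.
Proof. unfold frob. apply rsum_nonneg; intros. apply rsum_nonneg; intros. apply Rle_0_sqr. Qed.

Lemma frob_eq0 m n X :
  frob m n X X <= 0 -> forall i j, (i < m)%nat -> (j < n)%nat -> X i j = 0.
Proof.
intros H i j Hi Hj. set (row i := rsum (fun j => X i j * X i j) n).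
assert (Hrow : forall i, 0 <= row i) by (intros; apply rsum_nonneg; intros; apply Rle_0_sqr).
assert (Hri : row i <= 0).
{ pose proof (sqr_le_rsum (fun i => sqrt (row i)) m i Hi) as H1. simpl in H1.
  rewrite sqrt_sqrt in H1 by auto.
  rewrite (rsum_ext _ row) in H1 by (intros; apply sqrt_sqrt; auto).
  unfold frob in H. fold row in H. lra. }
exact (rsum_sqr_eq0 (fun j => X i j) n Hri j Hj).
Qed.

Lemma frob_svd_mx (m n r : nat) U1 d1 V1 U2 d2 V2 :
  frob m n (svd_mx r U1 d1 V1) (svd_mx r U2 d2 V2) =
  rsum (fun k => rsum (fun l => d1 k * d2 l * rsum (fun i => U1 i k * U2 i l) m
                                  * rsum (fun j => V1 j k * V2 j l) n) r) r.
Proof.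
unfold frob, svd_mx.
transitivity (rsum (fun i => rsum (fun j => rsum (fun k => rsum (fun l =>
   U1 i k * d1 k * V1 j k * (U2 i l * d2 l * V2 j l)) r) r) n) m).
{ apply rsum_ext; intros i _; apply rsum_ext; intros j _. apply rsum_mult. }
transitivity (rsum (fun i => rsum (fun k => rsum (fun j => rsum (fun l =>
   U1 i k * d1 k * V1 j k * (U2 i l * d2 l * V2 j l)) r) n) r) m).
{ apply rsum_ext; intros i _. apply rsum_swap. }
rewrite rsum_swap. apply rsum_ext; intros k _.
transitivity (rsum (fun i => rsum (fun l => rsum (fun j =>
   U1 i k * d1 k * V1 j k * (U2 i l * d2 l * V2 j l)) n) r) m).
{ apply rsum_ext; intros i _. apply rsum_swap. }
rewrite rsum_swap. apply rsum_ext; intros l _.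
rewrite Rmult_assoc, rsum_mult, <- rsum_scal_l. apply rsum_ext; intros i _.
rewrite <- rsum_scal_l. apply rsum_ext; intros j _. ring.
Qed.

Lemma frob_svd_mx_same (m n : nat) U d d' V :
  orthonormal_cols m m U -> orthonormal_cols n m V ->
  frob m n (svd_mx m U d V) (svd_mx m U d' V) = rsum (fun k => d k * d' k) m.
Proof.
intros HU HV. rewrite frob_svd_mx. apply rsum_ext; intros k Hk.
rewrite (rsum_ext _ (fun l => delta k l * (d k * d' l))).
- apply rsum_delta_r; auto.
- intros l Hl. rewrite HU, HV by auto. unfold delta. destruct (Nat.eq_dec k l); [subst; ring|ring].
Qed.

Lemma bessel (q r : nat) (E : nat -> nat -> R) (x : nat -> R) :
  orthonormal_cols q r E ->
  rsum (fun l => rsum (fun i => x i * E i l) q * rsum (fun i => x i * E i l) q) r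
  <= rsum (fun i => x i * x i) q.
Proof.
intros HE. set (cf l := rsum (fun i => x i * E i l) q).
set (proj i := rsum (fun l => cf l * E i l) r).
assert (Hproj : rsum (fun i => proj i * proj i) q = rsum (fun l => cf l * cf l) r).
{ unfold proj. rewrite (rsum_ext _ (fun i => rsum (fun l => rsum (fun l' =>
    cf l * cf l' * (E i l * E i l')) r) r)) by (intros; rewrite rsum_mult;
    apply rsum_ext; intros; apply rsum_ext; intros; ring).
  rewrite rsum_swap. apply rsum_ext; intros l Hl. rewrite rsum_swap.
  rewrite (rsum_ext _ (fun l' => delta l l' * (cf l * cf l'))).
  - apply rsum_delta_r; auto.
  - intros l' Hl'. rewrite rsum_scal_l, HE by auto. ring. }
assert (Hcross : rsum (fun i => x i * proj i) q = rsum (fun l => cf l * cf l) r).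
{ unfold proj. rewrite (rsum_ext _ (fun i => rsum (fun l => cf l * (x i * E i l)) r))
    by (intros; rewrite <- rsum_scal_l; apply rsum_ext; intros; ring).
  rewrite rsum_swap. apply rsum_ext; intros l _. apply rsum_scal_l. }
assert (H0 : 0 <= rsum (fun i => (x i - proj i) * (x i - proj i)) q)
  by (apply rsum_nonneg; intros; apply Rle_0_sqr).
rewrite (rsum_ext _ (fun i => x i * x i - 2 * (x i * proj i) + proj i * proj i)) in H0
  by (intros; ring).
rewrite rsum_plus, rsum_minus, rsum_scal_l, Hproj, Hcross in H0. unfold cf in H0. lra.
Qed.

Definition trunc (m : nat) (s : nat -> R) (k : nat) : R :=
  if Compare_dec.lt_dec k m then s k else 0.

Lemma rsum_abel_trunc (s x : nat -> R) m :
  rsum (fun k => s k * x k) m =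
  rsum (fun p => (trunc m s p - trunc m s (S p)) * rsum x (S p)) m.
Proof.
rewrite (rsum_ext _ (fun k => trunc m s k * x k)).
- rewrite rsum_abel. unfold trunc at 3. destruct (Compare_dec.lt_dec m m); [lia|ring].
- intros i Hi. unfold trunc. destruct (Compare_dec.lt_dec i m); [reflexivity|lia].
Qed.

Lemma trunc_diff_nonneg m s p :
  nonincr_nonneg m s -> (p < m)%nat -> 0 <= trunc m s p - trunc m s (S p).
Proof.
intros [Hd Hn] Hp. unfold trunc.
destruct (Compare_dec.lt_dec p m); [|lia].
destruct (Compare_dec.lt_dec (S p) m).
- pose proof (Hd p l0). lra.
- pose proof (Hn p Hp). lra.
Qed.

Definition corner_sum (W : nat -> nat -> R) (p r : nat) : R :=
  rsum (fun l => rsum (fun k => W k l) (S p)) (S r).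

Lemma rsum_double_abel m (s t : nat -> R) (W : nat -> nat -> R) :
  rsum (fun k => rsum (fun l => s k * t l * W k l) m) m =
  rsum (fun p => (trunc m s p - trunc m s (S p)) *
     rsum (fun r => (trunc m t r - trunc m t (S r)) * corner_sum W p r) m) m.
Proof.
transitivity (rsum (fun k => s k * rsum (fun l => t l * W k l) m) m).
{ apply rsum_ext; intros k _. rewrite <- rsum_scal_l. apply rsum_ext; intros; ring. }
rewrite rsum_abel_trunc. apply rsum_ext; intros p _. f_equal.
rewrite rsum_swap.
transitivity (rsum (fun l => t l * rsum (fun k => W k l) (S p)) m).
{ apply rsum_ext; intros l _. rewrite <- rsum_scal_l. reflexivity. }
apply rsum_abel_trunc.
Qed.

Lemma corner_sum_delta p r : corner_sum delta p r = INR (Nat.min (S r) (S p)).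
Proof.
unfold corner_sum.
rewrite (rsum_ext _ (fun l => if Compare_dec.lt_dec l (S p) then 1 else 0)).
- generalize (S p) as P; generalize (S r) as N; intros N P.
  induction N as [|N IH]; [reflexivity|].
  rewrite rsum_S, IH. destruct (Compare_dec.lt_dec N P).
  + replace (Nat.min (S N) P) with (S (Nat.min N P)) by lia. rewrite (S_INR (Nat.min N P)). ring.
  + replace (Nat.min (S N) P) with (Nat.min N P) by lia. ring.
- intros l _. destruct (Compare_dec.lt_dec l (S p)).
  + rewrite (rsum_ext _ (fun k => delta k l * 1)) by (intros; ring). apply rsum_delta_l; auto.
  + apply rsum_zero. intros k Hk. unfold delta. destruct (Nat.eq_dec k l); [lia|reflexivity].
Qed.

(* Both sides are expanded by double summation by parts; the corner sums of a
   doubly substochastic matrix are dominated by those of the identity. *)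
Lemma rearrangement_substochastic m (s t : nat -> R) (W : nat -> nat -> R) :
  nonincr_nonneg m s -> nonincr_nonneg m t ->
  (forall k l, (k < m)%nat -> (l < m)%nat -> 0 <= W k l) ->
  (forall k, (k < m)%nat -> rsum (fun l => W k l) m <= 1) ->
  (forall l, (l < m)%nat -> rsum (fun k => W k l) m <= 1) ->
  rsum (fun k => rsum (fun l => s k * t l * W k l) m) m <= rsum (fun k => s k * t k) m.
Proof.
intros Hs Ht HW Hr Hc.
assert (Eid : rsum (fun k => s k * t k) m = rsum (fun k => rsum (fun l => s k * t l * delta k l) m) m).
{ apply rsum_ext; intros k Hk.
  rewrite (rsum_ext _ (fun l => delta k l * (s k * t l))) by (intros; ring).
  rewrite rsum_delta_r; auto. }
rewrite Eid, !rsum_double_abel.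
apply rsum_le; intros p Hp. apply Rmult_le_compat_l; [apply trunc_diff_nonneg; auto|].
apply rsum_le; intros r Hr'. apply Rmult_le_compat_l; [apply trunc_diff_nonneg; auto|].
rewrite corner_sum_delta.
assert (B1 : corner_sum W p r <= INR (S p)).
{ unfold corner_sum. rewrite rsum_swap, <- rsum_const1. apply rsum_le; intros k Hk.
  apply Rle_trans with (rsum (fun l => W k l) m); [|apply Hr; lia].
  apply rsum_le_extend; [lia|]. intros; apply HW; lia. }
assert (B2 : corner_sum W p r <= INR (S r)).
{ unfold corner_sum. rewrite <- rsum_const1. apply rsum_le; intros l Hl.
  apply Rle_trans with (rsum (fun k => W k l) m); [|apply Hc; lia].
  apply rsum_le_extend; [lia|]. intros; apply HW; lia. }
destruct (Nat.le_ge_cases (S r) (S p)); [rewrite Nat.min_l|rewrite Nat.min_r]; auto.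
Qed.

Lemma bessel_col (q r : nat) (E F : nat -> nat -> R) k :
  orthonormal_cols q r E -> orthonormal_cols q (S k) F ->
  rsum (fun l => rsum (fun i => F i k * E i l) q * rsum (fun i => F i k * E i l) q) r <= 1.
Proof.
intros HE HF. pose proof (bessel q r E (fun i => F i k) HE) as Hb. cbv beta in Hb.
rewrite (HF k k ltac:(lia) ltac:(lia)) in Hb. unfold delta in Hb.
destruct (Nat.eq_dec k k); [exact Hb|lia].
Qed.

(* The matrix W_kl = (<u_k, u'_l>^2 + <v_k, v'_l>^2) / 2 dominates the
   cross terms (AM-GM) and is doubly substochastic (Bessel). *)
Theorem von_neumann_trace m n U1 s1 V1 U2 s2 V2 :
  orthonormal_cols m m U1 -> orthonormal_cols n m V1 ->
  orthonormal_cols m m U2 -> orthonormal_cols n m V2 ->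
  nonincr_nonneg m s1 -> nonincr_nonneg m s2 ->
  frob m n (svd_mx m U1 s1 V1) (svd_mx m U2 s2 V2) <= rsum (fun k => s1 k * s2 k) m.
Proof.
intros HU1 HV1 HU2 HV2 Hs1 Hs2. rewrite frob_svd_mx.
set (P := fun k l => rsum (fun i => U1 i k * U2 i l) m).
set (Q := fun k l => rsum (fun j => V1 j k * V2 j l) n).
assert (HP : forall k l, P k l = rsum (fun i => U2 i l * U1 i k) m)
  by (intros; apply rsum_ext; intros; ring).
assert (HQ : forall k l, Q k l = rsum (fun j => V2 j l * V1 j k) n)
  by (intros; apply rsum_ext; intros; ring).
apply Rle_trans with
  (rsum (fun k => rsum (fun l => s1 k * s2 l * ((P k l * P k l + Q k l * Q k l) / 2)) m) m).
{ apply rsum_le; intros k Hk; apply rsum_le; intros l Hl.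
  pose proof (proj2 Hs1 k Hk); pose proof (proj2 Hs2 l Hl).
  change (rsum (fun i => U1 i k * U2 i l) m) with (P k l).
  change (rsum (fun j => V1 j k * V2 j l) n) with (Q k l).
  assert (0 <= s1 k * s2 l) by nra.
  assert (P k l * Q k l <= (P k l * P k l + Q k l * Q k l) / 2)
    by (pose proof (Rle_0_sqr (P k l - Q k l)); unfold Rsqr in *; lra).
  clearbody P Q. nra. }
apply rearrangement_substochastic; auto.
- intros k l _ _. pose proof (Rle_0_sqr (P k l)). pose proof (Rle_0_sqr (Q k l)).
  unfold Rsqr in *. lra.
- intros k Hk.
  pose proof (bessel_col m m U2 U1 k HU2 (fun k' l' Hk' Hl' => HU1 k' l' ltac:(lia) ltac:(lia))).
  pose proof (bessel_col n m V2 V1 k HV2 (fun k' l' Hk' Hl' => HV1 k' l' ltac:(lia) ltac:(lia))).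
  rewrite (rsum_ext _ (fun l => / 2 * (P k l * P k l) + / 2 * (Q k l * Q k l))) by (intros; field).
  rewrite rsum_plus, !rsum_scal_l. unfold P, Q. lra.
- intros l Hl.
  pose proof (bessel_col m m U1 U2 l HU1 (fun k' l' Hk' Hl' => HU2 k' l' ltac:(lia) ltac:(lia))).
  pose proof (bessel_col n m V1 V2 l HV1 (fun k' l' Hk' Hl' => HV2 k' l' ltac:(lia) ltac:(lia))).
  rewrite (rsum_ext _ (fun k => / 2 * (P k l * P k l) + / 2 * (Q k l * Q k l))) by (intros; field).
  rewrite rsum_plus, !rsum_scal_l.
  rewrite (rsum_ext (fun k => P k l * P k l)
    (fun k => rsum (fun i => U2 i l * U1 i k) m * rsum (fun i => U2 i l * U1 i k) m))
    by (intros; rewrite HP; reflexivity).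
  rewrite (rsum_ext (fun k => Q k l * Q k l)
    (fun k => rsum (fun j => V2 j l * V1 j k) n * rsum (fun j => V2 j l * V1 j k) n))
    by (intros; rewrite HQ; reflexivity).
  lra.
Qed.

(** * Singular value decompositions *)

Section SvdFacts.
Variables (m n : nat) (Y U : nat -> nat -> R) (s : nat -> R) (V : nat -> nat -> R).
Hypothesis Hsvd : is_svd m n Y U s V.

Lemma svd_orth_U : orthonormal_cols m m U.
Proof. exact (proj1 Hsvd). Qed.

Lemma svd_orth_V : orthonormal_cols n m V.
Proof. exact (proj1 (proj2 Hsvd)). Qed.

Lemma svd_nonincr_nonneg : nonincr_nonneg m s.
Proof. destruct Hsvd as [_ [_ [H1 [H2 _]]]]. split; auto. Qed.

Lemma svd_entry i j : (i < m)%nat -> (j < n)%nat -> Y i j = svd_mx m U s V i j.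
Proof. apply Hsvd. Qed.

Lemma frob_svd_l X : frob m n Y X = frob m n (svd_mx m U s V) X.
Proof. apply frob_ext; [apply svd_entry|reflexivity]. Qed.

Lemma frob_svd_sqr : frob m n Y Y = rsum (fun k => s k * s k) m.
Proof.
rewrite frob_svd_l, frob_sym, frob_svd_l.
apply frob_svd_mx_same; [apply svd_orth_U|apply svd_orth_V].
Qed.

End SvdFacts.

Lemma frob_svd_le m n X UX sX VX Y UY sY VY :
  is_svd m n X UX sX VX -> is_svd m n Y UY sY VY ->
  frob m n X Y <= rsum (fun k => sX k * sY k) m.
Proof.
intros HX HY. rewrite (frob_svd_l _ _ _ _ _ _ HX), frob_sym, (frob_svd_l _ _ _ _ _ _ HY), frob_sym.
apply von_neumann_trace; eauto using svd_orth_U, svd_orth_V, svd_nonincr_nonneg.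
Qed.

(* <Y, Y> = sum s1^2 = sum s2^2, while von Neumann bounds <Y, Y> by sum s1 s2. *)
Lemma svd_singular_values_unique m n Y U1 s1 V1 U2 s2 V2 :
  is_svd m n Y U1 s1 V1 -> is_svd m n Y U2 s2 V2 -> forall k, (k < m)%nat -> s1 k = s2 k.
Proof.
intros H1 H2.
pose proof (frob_svd_le _ _ _ _ _ _ _ _ _ _ H1 H2) as Hvn.
pose proof (frob_svd_sqr _ _ _ _ _ _ H1) as E1.
pose proof (frob_svd_sqr _ _ _ _ _ _ H2) as E2.
assert (Hz : rsum (fun k => (s1 k - s2 k) * (s1 k - s2 k)) m <= 0).
{ rewrite (rsum_ext _ (fun k => s1 k * s1 k + s2 k * s2 k - 2 * (s1 k * s2 k))) by (intros; ring).
  rewrite rsum_minus, rsum_plus, rsum_scal_l. lra. }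
intros k Hk. pose proof (rsum_sqr_eq0 (fun k => s1 k - s2 k) m Hz k Hk). simpl in *. lra.
Qed.

Lemma nonincr_le m (s : nat -> R) :
  (forall k, (S k < m)%nat -> s (S k) <= s k) ->
  forall i j, (i <= j)%nat -> (j < m)%nat -> s j <= s i.
Proof.
intros H i j Hij. induction Hij as [|j Hij IH]; intros Hj; [lra|].
pose proof (H j Hj). pose proof (IH ltac:(lia)). lra.
Qed.

Lemma count_nz_full (s : nat -> R) k : (forall i, (i < k)%nat -> s i <> 0) -> count_nz s k = k.
Proof.
induction k; intros H; simpl; [reflexivity|].
rewrite IHk by (intros; apply H; lia).
destruct (Req_EM_T (s k) 0); [exfalso; apply (H k); auto|lia].
Qed.

(* The nonzero entries of a nonincreasing nonnegative sequence form a prefix. *)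
Lemma rsum_count_nz (f : R -> R) (s : nat -> R) m : f 0 = 0 -> nonincr_nonneg m s ->
  rsum (fun i => f (s i)) (count_nz s m) = rsum (fun i => f (s i)) m.
Proof.
intros Hf. induction m; intros [Hd Hn]; simpl; [reflexivity|].
destruct (Req_EM_T (s m) 0) as [E|E].
- rewrite Nat.add_0_r, E, Hf, Rplus_0_r. apply IHm. split; intros; [apply Hd|apply Hn]; lia.
- rewrite count_nz_full, Nat.add_1_r; [reflexivity|].
  intros i Hi. pose proof (nonincr_le (S m) s Hd i m ltac:(lia) ltac:(lia)).
  pose proof (Hn m ltac:(lia)). lra.
Qed.

Lemma rho_0 a : rho a 0 = 0.
Proof. unfold rho, Rdiv. ring. Qed.

Lemma Tfun_svd a m n X U s V :
  is_svd m n X U s V -> Tfun a m n X = rsum (fun k => rho a (s k)) m.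
Proof.
intros H.
assert (Hsv : exists U' V', is_svd m n X U' (singvals m n X) V').
{ apply (epsilon_spec (inhabits (fun _ : nat => 0)) (fun s => exists U V, is_svd m n X U s V)).
  exists s, U, V. exact H. }
destruct Hsv as [U' [V' H']].
unfold Tfun, rankm. rewrite rsum_count_nz by (apply rho_0 || exact (svd_nonincr_nonneg _ _ _ _ _ _ H')).
apply rsum_ext; intros k Hk. rewrite (svd_singular_values_unique _ _ _ _ _ _ _ _ _ H' H k Hk).
reflexivity.
Qed.

(** * Existence of singular value decompositions *)

Definition dotv (q : nat) (u v : nat -> R) : R := rsum (fun i => u i * v i) q.

Definition bform (q : nat) (M : nat -> nat -> R) (u v : nat -> R) : R :=
  rsum (fun i => rsum (fun l => M i l * u i * v l) q) q.

Definition unit_orth (q k : nat) (w : nat -> nat -> R) (v : nat -> R) : Prop :=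
  dotv q v v = 1 /\ forall j, (j < k)%nat -> dotv q v (w j) = 0.

Module LinAlg.
Import ssreflect ssrfun ssrbool eqtype ssrnat fintype bigop ssralg matrix mxalgebra Rstruct.

Lemma rsum_big (f : nat -> R) n : rsum f n = (\sum_(i < n) f i)%R.
Proof.
elim: n => [|n IH] /=; first by rewrite big_ord0.
by rewrite big_ord_recr /= IH.
Qed.

Lemma delta_nat {n : nat} (i j : 'I_n) : delta i j = ((i == j)%:R)%R.
Proof.
rewrite /delta; case: Nat.eq_dec => [e|e]; case: eqP => // e'.
- by case: e'; apply: val_inj.
- by case: e; rewrite e'.
Qed.

Lemma exists_nonzero_orth (q k : nat) (w : nat -> nat -> R) : (k < q)%coq_nat ->
  exists v : nat -> R, (exists i, (i < q)%coq_nat /\ v i <> 0) /\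
    forall j, (j < k)%coq_nat -> rsum (fun i => v i * w j i) q = 0.
Proof.
move=> /ltP kq.
pose A : 'M[R]_(q, k) := (\matrix_(i, j) w (nat_of_ord j) (nat_of_ord i))%R.
have /eqP nz : (kermx A != 0)%R.
  rewrite -mxrank_eq0 mxrank_ker subn_eq0 -ltnNge.
  exact: leq_ltn_trans (rank_leq_col A) kq.
have [i [j Hij]] : exists i j, kermx A i j <> 0%R.
  apply: Classical_Prop.NNPP => H; apply: nz; apply/matrixP => i j.
  rewrite [X in _ = X]mxE; apply: Classical_Prop.NNPP => Hn; apply: H; exists i, j; exact: Hn.
pose v l := match Compare_dec.lt_dec l q with
  | left H => kermx A i (Ordinal (introT ltP H)) | right _ => 0 end.
have vE (l : 'I_q) : v l = kermx A i l.
  rewrite /v; case: Compare_dec.lt_dec => [H|H]; last by case: H; exact/ltP.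
  by congr (kermx A i _); apply: val_inj.
exists v; split.
  by exists (nat_of_ord j); split; [exact/ltP|rewrite vE].
move=> jj /ltP Hjj.
have /matrixP /(_ i (Ordinal Hjj)) := mulmx_ker A.
rewrite !mxE rsum_big => H0; apply: etrans H0.
by apply: eq_bigr => l _; rewrite vE [A _ _]mxE.
Qed.

Lemma orthonormal_rows (m : nat) (U : nat -> nat -> R) :
  orthonormal_cols m m U ->
  forall i j, (i < m)%coq_nat -> (j < m)%coq_nat -> rsum (fun k => U i k * U j k) m = delta i j.
Proof.
move=> H i j /ltP Hi /ltP Hj.
pose M : 'M[R]_m := (\matrix_(a, b) U (nat_of_ord a) (nat_of_ord b))%R.
have E : (M^T *m M = 1%:M)%R.
  apply/matrixP => k l; rewrite !mxE -delta_nat -(H k l (ltP (ltn_ord k)) (ltP (ltn_ord l))).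
  by rewrite rsum_big; apply: eq_bigr => a _; rewrite !mxE.
have /matrixP /(_ (Ordinal Hi) (Ordinal Hj)) := mulmx1C E.
rewrite !mxE -(delta_nat (Ordinal Hi) (Ordinal Hj)) rsum_big => <-.
by apply: eq_bigr => a _; rewrite !mxE.
Qed.
End LinAlg.

Module Compactness.
Import ssreflect ssrfun ssrbool eqtype ssrnat fintype ssralg ssrnum matrix interval.
Import Rstruct Rstruct_topology boolp classical_sets topology normedtype derive.
Local Open Scope classical_set_scope.

Definition ent {q} (M : 'rV[R]_q) (i : nat) : R :=
  match Compare_dec.lt_dec i q with
  | left H => M ord0 (Ordinal (introT ltP H)) | right _ => 0 end.

Lemma ent_continuous q i : continuous (fun M : 'rV[R]_q => ent M i).
Proof.
rewrite /ent; case: (Compare_dec.lt_dec i q) => H; [exact: coord_continuous|exact: cst_continuous].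
Qed.

Lemma rsum_continuous q (F : nat -> 'rV[R]_q -> R) n :
  (forall i, continuous (F i)) -> continuous (fun M => rsum (fun i => F i M) n).
Proof.
move=> HF; elim: n => [|n IH] /=; first exact: cst_continuous.
move=> x; exact: (@continuousD R R^o _ _ _ x (IH x) (HF n x)).
Qed.

Lemma mul_continuous q (F G : 'rV[R]_q -> R) :
  continuous F -> continuous G -> continuous (fun M => F M * G M).
Proof. move=> HF HG x; exact: (@continuousM R _ _ _ x (HF x) (HG x)). Qed.

Lemma ent_row q (v : nat -> R) i : (i < q)%coq_nat ->
  ent (\row_(l < q) v (nat_of_ord l))%R i = v i.
Proof. by move=> Hi; rewrite /ent; case: Compare_dec.lt_dec => H //; rewrite mxE. Qed.

Lemma ent_ord q (M : 'rV[R]_q) (i : 'I_q) : ent M i = M ord0 i.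
Proof.
rewrite /ent; case: Compare_dec.lt_dec => H; last by case: H; apply/ltP.
by congr (M _ _); apply: val_inj.
Qed.

Lemma unit_orth_row q k w v :
  unit_orth q k w v -> unit_orth q k w (ent (\row_(l < q) v (nat_of_ord l))%R).
Proof.
move=> [H1 H2]; split.
  by rewrite -H1 /dotv; apply: rsum_ext => i Hi; rewrite ent_row.
by move=> j Hj; rewrite -(H2 j Hj) /dotv; apply: rsum_ext => i Hi; rewrite ent_row.
Qed.

Lemma unit_orth_closed q k w : closed [set M : 'rV[R]_q | unit_orth q k w (ent M)].
Proof.
have -> : [set M : 'rV[R]_q | unit_orth q k w (ent M)] =
    (fun M => dotv q (ent M) (ent M)) @^-1` [set x | x = 1] `&`
    \bigcap_(j in [set j | (j < k)%coq_nat])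
      (fun M => dotv q (ent M) (w j)) @^-1` [set x | x = 0].
  by apply/seteqP; split => M /= [H1 H2]; split => // j Hj; apply: H2.
apply: closedI.
  apply: preimage_closed; last exact: closed_eq.
  by move=> M _; apply: rsum_continuous => i; apply: mul_continuous; exact: ent_continuous.
apply: closed_bigI => j _; apply: preimage_closed; last exact: closed_eq.
move=> M _; apply: rsum_continuous => i.
by apply: mul_continuous; [exact: ent_continuous|exact: cst_continuous].
Qed.

(* Unit vectors lie in the cube [-1, 1]^q, which is compact. *)
Lemma unit_orth_compact q k w : compact [set M : 'rV[R]_q | unit_orth q k w (ent M)].
Proof.
apply: (subclosed_compact (unit_orth_closed q k w)
  (@rV_compact _ q _ (fun=> @segment_compact _ (-1 : R)%R (1 : R)%R))).
move=> M [H1 _] i /=.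
have := sqr_le_rsum (ent M) q i (ltP (ltn_ord i)).
rewrite /dotv in H1; rewrite H1 ent_ord; move: (M ord0 i) => x Hle.
rewrite in_itv /=; apply/andP; split; apply/RleP;
  [change (-1)%R with (Ropp (IZR 1)); nra|change 1%R with (IZR 1); nra].
Qed.

Lemma bform_max_exists (q k : nat) (M w : nat -> nat -> R) :
  (exists v, unit_orth q k w v) ->
  exists u, unit_orth q k w u /\
    forall v, unit_orth q k w v -> Rle (bform q M v v) (bform q M u u).
Proof.
move=> [v0 Hv0].
pose C := [set x : 'rV[R]_q | unit_orth q k w (ent x)].
have bform_row v : bform q M (ent (\row_(l < q) v (nat_of_ord l))%R)
                             (ent (\row_(l < q) v (nat_of_ord l))%R) = bform q M v v.
  by apply: rsum_ext => i Hi; apply: rsum_ext => l Hl; rewrite !ent_row.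
have C0 : C !=set0 by exists (\row_(l < q) v0 (nat_of_ord l))%R; apply: unit_orth_row.
have fc : continuous (fun x : 'rV[R]_q => bform q M (ent x) (ent x)).
  apply: rsum_continuous => i; apply: rsum_continuous => l.
  apply: mul_continuous; last exact: ent_continuous.
  by apply: mul_continuous; [exact: cst_continuous|exact: ent_continuous].
have [c Cc Hmax] := compact_EVT_max C0 (unit_orth_compact q k w) (continuous_subspaceT fc).
exists (ent c); split; first by move: Cc; rewrite inE.
move=> v Pv; rewrite -(bform_row v).
have := Hmax (\row_(l < q) v (nat_of_ord l))%R.
by rewrite inE => /(_ (unit_orth_row _ _ _ _ Pv)) /RleP.
Qed.
End Compactness.

Definition mulv (q : nat) (M : nat -> nat -> R) (u : nat -> R) : nat -> R :=
  fun i => rsum (fun l => M i l * u l) q.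

Lemma dotv_sym q u v : dotv q u v = dotv q v u.
Proof. unfold dotv. apply rsum_ext; intros; ring. Qed.

Lemma dotv_lin_l q u v w (t : R) :
  dotv q (fun i => v i + t * w i) u = dotv q v u + t * dotv q w u.
Proof. unfold dotv. rewrite <- rsum_scal_l, <- rsum_plus. apply rsum_ext; intros; ring. Qed.

Lemma dotv_scal_l q u v (t : R) : dotv q (fun i => t * u i) v = t * dotv q u v.
Proof. unfold dotv. rewrite <- rsum_scal_l. apply rsum_ext; intros; ring. Qed.

Lemma dotv_scal_r q u v (t : R) : dotv q u (fun i => t * v i) = t * dotv q u v.
Proof. unfold dotv. rewrite <- rsum_scal_l. apply rsum_ext; intros; ring. Qed.

Lemma dotv_ext q u u' v v' :
  (forall i, (i < q)%nat -> u i = u' i) -> (forall i, (i < q)%nat -> v i = v' i) ->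
  dotv q u v = dotv q u' v'.
Proof. intros Hu Hv. unfold dotv. apply rsum_ext; intros. rewrite Hu, Hv by auto. reflexivity. Qed.

Lemma dotv_nonneg q u : 0 <= dotv q u u.
Proof. apply rsum_nonneg; intros. apply Rle_0_sqr. Qed.

Lemma dotv_eq0 q u : dotv q u u = 0 -> forall i, (i < q)%nat -> u i = 0.
Proof. intros H. apply rsum_sqr_eq0. unfold dotv in H. lra. Qed.

Lemma dotv_normalize q u :
  0 < dotv q u u -> dotv q (fun i => / sqrt (dotv q u u) * u i) (fun i => / sqrt (dotv q u u) * u i) = 1.
Proof.
intros H. rewrite dotv_scal_l, dotv_scal_r.
pose proof (sqrt_lt_R0 _ H). pose proof (sqrt_sqrt (dotv q u u) ltac:(lra)).
set (N := dotv q u u) in *. rewrite <- H1 at 3. field. lra.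
Qed.

Lemma bform_mulv q M u v : bform q M u v = dotv q u (mulv q M v).
Proof.
unfold bform, dotv, mulv. apply rsum_ext; intros i _. rewrite <- rsum_scal_l.
apply rsum_ext; intros; ring.
Qed.

Lemma bform_lin_l q M u v w (t : R) :
  bform q M (fun i => v i + t * w i) u = bform q M v u + t * bform q M w u.
Proof.
unfold bform. rewrite <- rsum_scal_l, <- rsum_plus. apply rsum_ext; intros.
rewrite <- rsum_scal_l, <- rsum_plus. apply rsum_ext; intros. ring.
Qed.

Lemma bform_lin_r q M u v w (t : R) :
  bform q M u (fun i => v i + t * w i) = bform q M u v + t * bform q M u w.
Proof.
unfold bform. rewrite <- rsum_scal_l, <- rsum_plus. apply rsum_ext; intros.
rewrite <- rsum_scal_l, <- rsum_plus. apply rsum_ext; intros. ring.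
Qed.

Lemma bform_scal q M u (t : R) :
  bform q M (fun i => t * u i) (fun i => t * u i) = t * t * bform q M u u.
Proof.
unfold bform. rewrite <- rsum_scal_l. apply rsum_ext; intros.
rewrite <- rsum_scal_l. apply rsum_ext; intros. ring.
Qed.

Lemma linear_dominated_by_quadratic (B C : R) : (forall t, 2 * t * B + t * t * C <= 0) -> B = 0.
Proof.
intros H. pose proof (Rle_abs (- C)) as HC. rewrite Rabs_Ropp in HC. pose proof (Rabs_pos C).
set (D := Rabs C + 1).
assert (HD : 0 < D) by (unfold D; lra).
assert (H2 : 0 < 2 * D + C) by (unfold D; lra).
pose proof (H (B / D)) as H1.
replace (2 * (B / D) * B + B / D * (B / D) * C) with (B * B * (2 * D + C) / (D * D)) in H1
  by (field; lra).
assert (B * B * (2 * D + C) <= 0).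
{ apply Rmult_le_reg_r with (r := / (D * D)); [apply Rinv_0_lt_compat; nra|].
  rewrite Rmult_0_l. exact H1. }
assert (B * B <= 0) by nra. nra.
Qed.

Lemma unit_orth_ext q k u u' v :
  (forall j, (j < k)%nat -> u j = u' j) -> unit_orth q k u v -> unit_orth q k u' v.
Proof. intros H [H1 H2]. split; auto. intros j Hj. rewrite <- H by auto. auto. Qed.

Lemma unit_orth_weaken q k k' u v : (k' <= k)%nat -> unit_orth q k u v -> unit_orth q k' u v.
Proof. intros H [H1 H2]. split; auto. intros j Hj. apply H2. lia. Qed.

Lemma exists_unit_orth q K (u : nat -> nat -> R) : (K < q)%nat -> exists v, unit_orth q K u v.
Proof.
intros HK. destruct (LinAlg.exists_nonzero_orth q K u HK) as [v [[i [Hi Hnz]] Horth]].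
assert (HN : 0 < dotv q v v).
{ pose proof (sqr_le_rsum v q i Hi). assert (0 < v i * v i) by (apply Rsqr_pos_lt; auto).
  unfold dotv. lra. }
exists (fun l => / sqrt (dotv q v v) * v l). split.
- apply dotv_normalize; auto.
- intros j Hj. rewrite dotv_scal_l. unfold dotv. rewrite Horth by auto. ring.
Qed.

Definition orthonormal_family (q K : nat) (v : nat -> nat -> R) : Prop :=
  forall k l, (k < K)%nat -> (l < K)%nat -> dotv q (v k) (v l) = delta k l.

Lemma orthonormal_family_extend q K v w :
  orthonormal_family q K v -> unit_orth q K v w ->
  orthonormal_family q (S K) (fun k => if Nat.eq_dec k K then w else v k).
Proof.
intros Ho [Hw1 Hw2] k l Hk Hl. unfold delta.
destruct (Nat.eq_dec k K) as [->|Hk']; destruct (Nat.eq_dec l K) as [->|Hl'].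
- rewrite Hw1. destruct (Nat.eq_dec K K); [reflexivity|lia].
- rewrite Hw2 by lia. destruct (Nat.eq_dec K l); [lia|reflexivity].
- rewrite dotv_sym, Hw2 by lia. destruct (Nat.eq_dec k K); [lia|reflexivity].
- apply Ho; lia.
Qed.

Section Spectral.
Variables (q : nat) (M : nat -> nat -> R).
Hypothesis HM : forall i l, M i l = M l i.

Lemma bform_sym u v : bform q M u v = bform q M v u.
Proof.
unfold bform. rewrite rsum_swap. apply rsum_ext; intros; apply rsum_ext; intros.
rewrite HM. ring.
Qed.

Lemma bform_le_max K (u : nat -> nat -> R) (lam : R) :
  (forall v, unit_orth q K u v -> bform q M v v <= lam) ->
  forall v, (forall j, (j < K)%nat -> dotv q v (u j) = 0) -> bform q M v v <= lam * dotv q v v.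
Proof.
intros Hmax v Hv. pose proof (dotv_nonneg q v) as Hn.
destruct (Req_dec (dotv q v v) 0) as [E|E].
- rewrite bform_mulv, E. unfold dotv. rewrite (rsum_zero _ q); [lra|].
  intros i Hi. rewrite (dotv_eq0 q v E i Hi). ring.
- set (c := / sqrt (dotv q v v)).
  assert (Hok : unit_orth q K u (fun i => c * v i)).
  { split; [apply dotv_normalize; lra|].
    intros j Hj. rewrite dotv_scal_l, Hv by auto. ring. }
  pose proof (Hmax _ Hok) as H1. rewrite bform_scal in H1.
  assert (Hc : c * c * dotv q v v = 1).
  { pose proof (dotv_normalize q v ltac:(lra)) as H2. rewrite dotv_scal_l, dotv_scal_r in H2.
    fold c in H2. lra. }
  assert (Hcpos : 0 < c * c) by nra.
  apply Rmult_le_reg_l with (r := c * c); [lra|].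
  replace (c * c * (lam * dotv q v v)) with (lam * (c * c * dotv q v v)) by ring. rewrite Hc. lra.
Qed.

(* First-order condition: perturbing the maximizer uK within the constraint set
   by t v changes the form by 2 t B(uK, v) + O(t^2). *)
Lemma bform_max_orth K (u : nat -> nat -> R) (uK : nat -> R) :
  unit_orth q K u uK ->
  (forall v, unit_orth q K u v -> bform q M v v <= bform q M uK uK) ->
  forall v, (forall j, (j < K)%nat -> dotv q v (u j) = 0) -> dotv q v uK = 0 ->
  bform q M uK v = 0.
Proof.
intros [Hu1 Hu2] Hmax v Hv Hvu.
apply (linear_dominated_by_quadratic _ (bform q M v v - bform q M uK uK * dotv q v v)). intros t.
assert (Hw : forall j, (j < K)%nat -> dotv q (fun i => uK i + t * v i) (u j) = 0).
{ intros j Hj. rewrite dotv_lin_l, Hu2, Hv by auto. ring. }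
pose proof (bform_le_max K u _ Hmax _ Hw) as H1.
rewrite bform_lin_l, !bform_lin_r, dotv_lin_l, !(dotv_sym q _ (fun i => uK i + t * v i)),
  !dotv_lin_l, (bform_sym v uK), (dotv_sym q uK v), Hvu, Hu1 in H1.
nra.
Qed.

Lemma bform_max_eigen K (u : nat -> nat -> R) (lam : nat -> R) (uK : nat -> R) :
  (forall k i, (k < K)%nat -> (i < q)%nat -> mulv q M (u k) i = lam k * u k i) ->
  unit_orth q K u uK ->
  (forall v, unit_orth q K u v -> bform q M v v <= bform q M uK uK) ->
  forall i, (i < q)%nat -> mulv q M uK i = bform q M uK uK * uK i.
Proof.
intros Heig Hok Hmax. pose proof Hok as [Hu1 Hu2].
set (lK := bform q M uK uK).
set (r i := mulv q M uK i + (- lK) * uK i).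
assert (Hr1 : forall j, (j < K)%nat -> dotv q r (u j) = 0).
{ intros j Hj. unfold r. rewrite dotv_lin_l, Hu2 by auto.
  rewrite dotv_sym, <- bform_mulv, bform_sym, bform_mulv.
  rewrite (dotv_ext q uK uK (mulv q M (u j)) (fun i => lam j * u j i)) by auto.
  rewrite dotv_sym, dotv_scal_l, dotv_sym, Hu2 by auto. ring. }
assert (Hr2 : dotv q r uK = 0).
{ unfold r. rewrite dotv_lin_l, Hu1, dotv_sym, <- bform_mulv. fold lK. ring. }
pose proof (bform_max_orth K u uK Hok Hmax r Hr1 Hr2) as HB.
assert (Hrr : dotv q r r = 0).
{ transitivity (dotv q r (mulv q M uK) + (- lK) * dotv q r uK).
  - unfold dotv. rewrite <- rsum_scal_l, <- rsum_plus. apply rsum_ext; intros. unfold r at 2. ring.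
  - rewrite Hr2, <- bform_mulv, bform_sym, HB. ring. }
intros i Hi. pose proof (dotv_eq0 q r Hrr i Hi) as Hz. unfold r in Hz. fold lK. lra.
Qed.

(* The first K steps of the variational (Courant-Fischer) construction of an
   orthonormal eigenbasis with nonincreasing eigenvalues. *)
Definition partial_eigenbasis (K : nat) (u : nat -> nat -> R) (lam : nat -> R) : Prop :=
  orthonormal_family q K u /\
  (forall k i, (k < K)%nat -> (i < q)%nat -> mulv q M (u k) i = lam k * u k i) /\
  (forall k, (S k < K)%nat -> lam (S k) <= lam k) /\
  (forall k, (k < K)%nat -> forall v, unit_orth q k u v -> bform q M v v <= lam k).

Lemma partial_eigenbasis_step K u lam : (K < q)%nat ->
  partial_eigenbasis K u lam -> exists u' lam', partial_eigenbasis (S K) u' lam'.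
Proof.
intros HK [Ho [He [Hs Hm]]].
destruct (Compactness.bform_max_exists q K M u (exists_unit_orth q K u HK)) as [uK [Hok Hmax]].
pose proof (bform_max_eigen K u lam uK He Hok Hmax) as HeK.
set (u' k := if Nat.eq_dec k K then uK else u k).
assert (Hagree : forall j, (j < K)%nat -> u' j = u j).
{ intros j Hj. unfold u'. destruct (Nat.eq_dec j K); [lia|reflexivity]. }
exists u', (fun k => if Nat.eq_dec k K then bform q M uK uK else lam k).
split; [|split; [|split]].
- apply orthonormal_family_extend; auto.
- intros k i Hk Hi. unfold u'. destruct (Nat.eq_dec k K) as [->|Hk']; [auto|apply He; auto; lia].
- intros k Hk. destruct (Nat.eq_dec (S k) K) as [E|E]; destruct (Nat.eq_dec k K) as [E'|E']; try lia.
  + apply (Hm k ltac:(lia)). apply (unit_orth_weaken q K); [lia|auto].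
  + apply Hs; lia.
- intros k Hk v Hv. apply (unit_orth_ext q k u' u) in Hv; [|intros; apply Hagree; lia].
  destruct (Nat.eq_dec k K) as [->|Hk']; [apply Hmax; auto|apply Hm; auto; lia].
Qed.

Lemma eigenbasis_exists : exists u lam, partial_eigenbasis q u lam.
Proof.
assert (H : forall K, (K <= q)%nat -> exists u lam, partial_eigenbasis K u lam).
{ induction K; intros HK.
  - exists (fun _ _ => 0), (fun _ => 0).
    unfold partial_eigenbasis, orthonormal_family. repeat split; intros; lia.
  - destruct (IHK ltac:(lia)) as [u [lam H]]. apply (partial_eigenbasis_step K u lam); auto. }
apply H; lia.
Qed.

End Spectral.

Lemma orthonormal_expand m (U : nat -> nat -> R) (x : nat -> R) :
  orthonormal_cols m m U ->
  forall i, (i < m)%nat -> x i = rsum (fun k => U i k * rsum (fun i' => x i' * U i' k) m) m.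
Proof.
intros HU i Hi.
transitivity (rsum (fun i' => x i' * rsum (fun k => U i k * U i' k) m) m).
- rewrite (rsum_ext _ (fun i' => delta i i' * x i')).
  + symmetry. apply rsum_delta_r; auto.
  + intros i' Hi'. rewrite LinAlg.orthonormal_rows by auto. ring.
- rewrite (rsum_ext _ (fun i' => rsum (fun k => U i k * (x i' * U i' k)) m))
    by (intros; rewrite <- rsum_scal_l; apply rsum_ext; intros; ring).
  rewrite rsum_swap. apply rsum_ext; intros. apply rsum_scal_l.
Qed.

(* X = U Diag(sqrt lam) V^T where the columns of U are an eigenbasis of X X^T
   and V is obtained by normalizing X^T u_k (completed arbitrarily where lam_k = 0). *)
Section SvdExistence.
Variables (m n : nat) (X : nat -> nat -> R).
Hypothesis Hmn : (m <= n)%nat.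

Definition gram : nat -> nat -> R := fun i l => rsum (fun j => X i j * X l j) n.

Definition xt_mul (u : nat -> R) : nat -> R := fun j => rsum (fun i => X i j * u i) m.

Lemma gram_sym i l : gram i l = gram l i.
Proof. unfold gram. apply rsum_ext; intros; ring. Qed.

Lemma dotv_xt_mul u v : dotv n (xt_mul u) (xt_mul v) = dotv m u (mulv m gram v).
Proof.
unfold dotv, xt_mul, mulv, gram.
transitivity (rsum (fun j => rsum (fun i => rsum (fun i' => X i j * u i * (X i' j * v i')) m) m) n).
{ apply rsum_ext; intros j _. apply rsum_mult. }
rewrite rsum_swap. apply rsum_ext; intros i _.
rewrite rsum_swap, <- rsum_scal_l. apply rsum_ext; intros i' _.
rewrite <- rsum_scal_r, <- rsum_scal_l. apply rsum_ext; intros j _. ring.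
Qed.

Section RightVectors.
Variables (u : nat -> nat -> R) (lam : nat -> R).
Hypothesis Heig : partial_eigenbasis m gram m u lam.

Lemma dotv_xt_mul_eigen k l : (k < m)%nat -> (l < m)%nat ->
  dotv n (xt_mul (u k)) (xt_mul (u l)) = lam l * delta k l.
Proof.
destruct Heig as [Ho [He _]]. intros Hk Hl.
rewrite dotv_xt_mul, (dotv_ext m (u k) (u k) _ (fun i => lam l * u l i)) by auto.
rewrite dotv_scal_r, Ho by auto. reflexivity.
Qed.

Lemma eigenvalue_nonneg k : (k < m)%nat -> 0 <= lam k.
Proof.
intros Hk. pose proof (dotv_xt_mul_eigen k k Hk Hk) as H. unfold delta in H.
destruct (Nat.eq_dec k k); [|lia]. pose proof (dotv_nonneg n (xt_mul (u k))). lra.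
Qed.

Lemma right_singular_vectors K : (K <= m)%nat ->
  exists v, orthonormal_family n K v /\
    forall k j, (k < K)%nat -> (j < n)%nat -> xt_mul (u k) j = sqrt (lam k) * v k j.
Proof.
destruct Heig as [_ [_ [Hs _]]].
induction K as [|K IH]; intros HK.
{ exists (fun _ _ => 0). split; [intros k l Hk|intros k j Hk]; lia. }
destruct (IH ltac:(lia)) as [v [Hv1 Hv2]].
assert (Hnext : exists w, unit_orth n K v w /\
          forall j, (j < n)%nat -> xt_mul (u K) j = sqrt (lam K) * w j).
{ destruct (Rlt_dec 0 (lam K)) as [Hpos|Hnpos].
  - pose proof (sqrt_lt_R0 _ Hpos) as HsK.
    assert (HdK : dotv n (xt_mul (u K)) (xt_mul (u K)) = lam K).
    { rewrite dotv_xt_mul_eigen by lia. unfold delta. destruct (Nat.eq_dec K K); [ring|lia]. }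
    set (w j := / sqrt (lam K) * xt_mul (u K) j).
    exists w. split; [split|].
    + pose proof (dotv_normalize n (xt_mul (u K)) ltac:(lra)) as H. rewrite HdK in H. exact H.
    + intros l Hl.
      assert (Hpl : 0 < lam l) by (pose proof (nonincr_le m lam Hs l K ltac:(lia) ltac:(lia)); lra).
      pose proof (sqrt_lt_R0 _ Hpl).
      rewrite (dotv_ext n w w (v l) (fun j => / sqrt (lam l) * xt_mul (u l) j)).
      * unfold w. rewrite dotv_scal_l, dotv_scal_r, dotv_xt_mul_eigen by lia.
        unfold delta. destruct (Nat.eq_dec K l); [lia|ring].
      * auto.
      * intros j Hj. rewrite Hv2 by auto. field. lra.
    + intros j Hj. unfold w. field. lra.
  - assert (HlK : lam K = 0) by (pose proof (eigenvalue_nonneg K ltac:(lia)); lra).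
    destruct (exists_unit_orth n K v ltac:(lia)) as [w Hw].
    exists w. split; auto. intros j Hj. rewrite HlK, sqrt_0, Rmult_0_l.
    apply (dotv_eq0 n (xt_mul (u K))); auto.
    rewrite dotv_xt_mul_eigen by lia. rewrite HlK. ring. }
destruct Hnext as [w [Hw Hwx]].
exists (fun k => if Nat.eq_dec k K then w else v k). split.
- apply orthonormal_family_extend; auto.
- intros k j Hk Hj. destruct (Nat.eq_dec k K) as [->|Hk']; [auto|apply Hv2; auto; lia].
Qed.

End RightVectors.

Theorem svd_exists : exists U s V, is_svd m n X U s V.
Proof.
destruct (eigenbasis_exists m gram gram_sym) as [u [lam Heig]].
destruct (right_singular_vectors u lam Heig m (le_n m)) as [v [Hv1 Hv2]].
pose proof Heig as [Ho [_ [Hs _]]].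
assert (HU : orthonormal_cols m m (fun i k => u k i)) by (intros k l Hk Hl; apply Ho; auto).
exists (fun i k => u k i), (fun k => sqrt (lam k)), (fun j k => v k j).
split; [exact HU|split; [|split; [|split]]].
- intros k l Hk Hl. apply Hv1; auto.
- intros k _. apply sqrt_pos.
- intros k Hk. apply sqrt_le_1_alt, Hs, Hk.
- intros i j Hi Hj.
  rewrite (orthonormal_expand m _ (fun i => X i j) HU i Hi).
  apply rsum_ext; intros k Hk. rewrite Rmult_assoc, <- Hv2 by auto. reflexivity.
Qed.

End SvdExistence.

(** * The scalar proximal problem *)

Definition prox_obj (L a w x : R) : R := / 2 * (x - w) ^ 2 + L * rho a x.

Lemma cos_3a (t : R) : cos (3 * t) = 4 * cos t ^ 3 - 3 * cos t.
Proof.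
replace (3 * t) with (2 * t + t) by ring.
rewrite cos_plus, cos_2a_cos, sin_2a.
pose proof (sin2_cos2 t) as H. unfold Rsqr in H.
transitivity ((2 * cos t * cos t - 1) * cos t - 2 * cos t * (sin t * sin t)); [ring|].
replace (sin t * sin t) with (1 - cos t * cos t) by lra. ring.
Qed.

Section ScalarProx.
Variables (L a : R).
Hypothesis (Ha : 0 < a) (HL : 0 < L).

Let c := L * (a + 1).

Lemma c_pos : 0 < c.
Proof. unfold c; nra. Qed.

Lemma thresh_case_iff : L <= a ^ 2 / (2 * (a + 1)) <-> 2 * c <= a ^ 2.
Proof.
unfold c; split; intros H.
- apply Rmult_le_compat_r with (r := 2 * (a + 1)) in H; [|lra].
  field_simplify in H; [lra|lra].
- apply Rmult_le_reg_r with (r := 2 * (a + 1)); [lra|].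
  field_simplify; lra.
Qed.

Lemma thresh_pos : 0 < thresh L a.
Proof.
unfold thresh; destruct (Rle_dec L (a ^ 2 / (2 * (a + 1)))) as [H|H].
- apply Rdiv_lt_0_compat; nra.
- assert (H2 : a ^ 2 < 2 * L * (a + 1)).
  { apply Rnot_le_lt in H. pose proof (proj2 thresh_case_iff). unfold c in *.
    destruct (Rle_dec (2 * (L * (a + 1))) (a ^ 2)); [pose proof (H0 r); lra|nra]. }
  assert (a < sqrt (2 * L * (a + 1))).
  { assert (Ea : sqrt (a ^ 2) = a) by (apply sqrt_pow2; lra). rewrite <- Ea at 1. apply sqrt_lt_1; nra. }
  lra.
Qed.

(* For w > thresh, the stationarity condition of x |-> prox_obj L a w x, written
   in z = a + x, is cubic (a + w) z = 0. *)
Definition cubic (y z : R) : R := z ^ 3 - y * z ^ 2 + c * a.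

Lemma cubic_root_largest (y z u : R) : 0 < y -> cubic y z = 0 -> 2 * y <= 3 * z -> 0 <= u -> cubic y u <= 0 -> u <= z.
Proof.
unfold cubic; intros Hy Hz H3 Hu Hq.
destruct (Rle_dec u z) as [|Hn]; [auto|exfalso].
apply Rnot_le_lt in Hn.
assert (Hpos : (u - z) * (u * u + u * z + z * z - y * (u + z)) > 0).
{ apply Rmult_lt_0_compat; [lra|].
  assert (u + z > 4 * y / 3) by lra.
  assert (u * u + u * z + z * z >= 3 / 4 * ((u + z) * (u + z))) by nra.
  nra. }
assert (E : z ^ 3 - y * z ^ 2 + c * a + (u - z) * (u * u + u * z + z * z - y * (u + z)) = u ^ 3 - y * u ^ 2 + c * a) by ring.
lra.
Qed.

Lemma cubic_thresh_witness (w : R) : thresh L a < w ->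
  (2 * c <= a ^ 2 /\ cubic (a + w) a <= 0) \/
  (a ^ 2 < 2 * c /\ cubic (a + w) (sqrt (2 * c)) <= 0).
Proof.
intros Hw. pose proof c_pos as Hc. unfold thresh in Hw.
destruct (Rle_dec L (a ^ 2 / (2 * (a + 1)))) as [H|H].
- left. split; [apply thresh_case_iff; auto|].
  unfold cubic. replace (L * (a + 1) / a) with (c / a) in Hw by (unfold c; field; lra).
  assert (c < a * w).
  { apply Rmult_lt_compat_l with (r := a) in Hw; [|lra].
    replace (a * (c / a)) with c in Hw by (field; lra). lra. }
  nra.
- right. assert (H2 : a ^ 2 < 2 * c).
  { destruct (Rle_dec (2 * c) (a ^ 2)) as [r|r]; [exfalso; apply H; apply thresh_case_iff; auto|lra]. }
  split; [auto|].
  replace (2 * L * (a + 1)) with (2 * c) in Hw by (unfold c; ring).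
  unfold cubic. pose proof (sqrt_sqrt (2 * c) ltac:(lra)) as Es.
  pose proof (sqrt_pos (2 * c)).
  replace (sqrt (2 * c) ^ 3) with (sqrt (2 * c) * (sqrt (2 * c) * sqrt (2 * c))) by ring.
  replace (sqrt (2 * c) ^ 2) with (sqrt (2 * c) * sqrt (2 * c)) by ring.
  rewrite Es. nra.
Qed.

Lemma cubic_min (y z : R) : 0 < y -> 0 <= z -> cubic y (2 * y / 3) <= cubic y z.
Proof.
intros Hy Hz. unfold cubic.
assert (E : z ^ 3 - y * z ^ 2 - ((2 * y / 3) ^ 3 - y * (2 * y / 3) ^ 2) = (z - 2 * y / 3) ^ 2 * (z + y / 3)) by (field; lra).
assert (0 <= (z - 2 * y / 3) ^ 2 * (z + y / 3)).
{ apply Rmult_le_pos; [apply pow2_ge_0|lra]. }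
lra.
Qed.

(* hfun is Viete's trigonometric formula for the largest root:
   a + h(w) = y/3 (1 + 2 cos th) with cos (3 th) = 1 - 27 c a / (2 y^3), y = a + w. *)
Lemma hfun_cubic_root (w : R) : thresh L a < w ->
  cubic (a + w) (a + hfun L a w) = 0 /\ 2 * (a + w) <= 3 * (a + hfun L a w).
Proof.
intros Hw. pose proof thresh_pos as Ht. pose proof c_pos as Hc.
set (y := a + w).
assert (Hy : 0 < y) by (unfold y; lra).
assert (Hw0 : 0 < w) by lra.
assert (Hb : c * a <= 4 * y ^ 3 / 27).
{ destruct (cubic_thresh_witness w Hw) as [[_ Hq]|[_ Hq]].
  - pose proof (cubic_min y a Hy ltac:(lra)). unfold cubic in *.
    assert (E : (2 * y / 3) ^ 3 - y * (2 * y / 3) ^ 2 = - (4 * y ^ 3 / 27)) by field.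
    fold y in Hq. lra.
  - pose proof (cubic_min y (sqrt (2 * c)) Hy (sqrt_pos _)). unfold cubic in *.
    assert (E : (2 * y / 3) ^ 3 - y * (2 * y / 3) ^ 2 = - (4 * y ^ 3 / 27)) by field.
    fold y in Hq. lra. }
unfold hfun, phi, sgn.
destruct (Rlt_dec 0 w) as [_|Hn]; [|lra].
rewrite (Rabs_right w) by lra. fold y.
set (u := 1 - 27 * L * a * (a + 1) / (2 * y ^ 3)).
assert (Hy3 : 0 < y ^ 3) by (apply pow_lt; lra).
assert (Hu1 : u <= 1).
{ unfold u. assert (0 <= 27 * L * a * (a + 1) / (2 * y ^ 3)).
  { apply Rmult_le_pos; [nra|]. left; apply Rinv_0_lt_compat; lra. }
  lra. }
assert (Hu2 : -1 <= u).
{ unfold u. assert (27 * L * a * (a + 1) / (2 * y ^ 3) <= 2).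
  { apply Rmult_le_reg_r with (r := 2 * y ^ 3); [lra|].
    unfold Rdiv. rewrite Rmult_assoc, Rinv_l by lra. fold c in Hb.
    replace (27 * L * a * (a + 1) * 1) with (27 * (c * a)) by (unfold c; ring). lra. }
  lra. }
set (th := acos u / 3).
pose proof (acos_bound u) as Hab.
assert (Hc3 : 4 * cos th ^ 3 - 3 * cos th = u).
{ rewrite <- cos_3a. unfold th. replace (3 * (acos u / 3)) with (acos u) by field.
  apply cos_acos; lra. }
assert (Hch : 1 / 2 <= cos th).
{ rewrite <- cos_PI3. pose proof PI_RGT_0.
  destruct (Req_dec th (PI / 3)) as [->|Hne]; [lra|].
  left. apply cos_decreasing_1; unfold th in *; lra. }
replace (a + 1 * (2 / 3 * y * cos th - 2 * a / 3 + w / 3)) with (y / 3 + 2 * y * cos th / 3) by (unfold y; field).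
split; [|nra].
unfold cubic.
assert (E : (y / 3 + 2 * y * cos th / 3) ^ 3 - y * (y / 3 + 2 * y * cos th / 3) ^ 2
            = 2 * y ^ 3 / 27 * (4 * cos th ^ 3 - 3 * cos th - 1)) by field.
rewrite E, Hc3. unfold u, c. field. lra.
Qed.

Lemma hfun_root_bounds (w : R) : thresh L a < w ->
  a <= a + hfun L a w /\ 2 * c <= (a + hfun L a w) ^ 2.
Proof.
intros Hw. pose proof thresh_pos as Ht. pose proof c_pos as Hc.
destruct (hfun_cubic_root w Hw) as [Hq H3].
set (z := a + hfun L a w) in *.
assert (Hy : 0 < a + w) by lra.
destruct (cubic_thresh_witness w Hw) as [[H1 Hq1]|[H1 Hq1]].
- pose proof (cubic_root_largest (a + w) z a Hy Hq H3 ltac:(lra) Hq1). split; nra.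
- pose proof (cubic_root_largest (a + w) z (sqrt (2 * c)) Hy Hq H3 (sqrt_pos _) Hq1).
  pose proof (sqrt_sqrt (2 * c) ltac:(lra)) as Es.
  assert (a < sqrt (2 * c)).
  { assert (Ea : sqrt (a ^ 2) = a) by (apply sqrt_pow2; lra). rewrite <- Ea at 1. apply sqrt_lt_1; nra. }
  pose proof (sqrt_pos (2 * c)). split; nra.
Qed.

Lemma gfun_nonneg (w : R) : 0 <= w -> 0 <= gfun L a w.
Proof.
intros Hw. unfold gfun. rewrite (Rabs_right w) by lra.
destruct (Rle_dec w (thresh L a)) as [H|H]; [lra|].
apply Rnot_le_lt in H. destruct (hfun_root_bounds w H). lra.
Qed.

Lemma gfun_le (w1 w2 : R) : 0 <= w1 -> w1 <= w2 -> gfun L a w1 <= gfun L a w2.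
Proof.
intros H1 H2. pose proof (gfun_nonneg w2 ltac:(lra)) as Hg2. unfold gfun in *.
rewrite (Rabs_right w1) by lra. rewrite (Rabs_right w2) in * by lra.
destruct (Rle_dec w1 (thresh L a)) as [A|A]; [auto|].
destruct (Rle_dec w2 (thresh L a)) as [B|B]; [lra|].
apply Rnot_le_lt in A. apply Rnot_le_lt in B.
destruct (hfun_cubic_root w1 A) as [Hq1 H31]. destruct (hfun_cubic_root w2 B) as [Hq2 H32].
destruct (hfun_root_bounds w1 A) as [Hz1 _].
set (z1 := a + hfun L a w1) in *. set (z2 := a + hfun L a w2) in *.
assert (Hq : cubic (a + w2) z1 <= 0).
{ unfold cubic in *. assert (0 <= (w2 - w1) * z1 ^ 2) by (apply Rmult_le_pos; [lra|apply pow2_ge_0]).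
  nra. }
pose proof (cubic_root_largest (a + w2) z2 z1 ltac:(lra) Hq2 H32 ltac:(lra) Hq).
unfold z1, z2 in *. lra.
Qed.

(* x / 2 + c / (a + x) attains its minimum over x >= 0 exactly at the threshold:
   at x = 0 when 2 c <= a^2, at a + x = sqrt (2 c) otherwise. *)
Lemma thresh_le_min (w x : R) : 0 <= x -> w <= thresh L a -> w <= x / 2 + c / (a + x).
Proof.
intros Hx H. pose proof c_pos as Hc.
unfold thresh in H. destruct (Rle_dec L (a ^ 2 / (2 * (a + 1)))) as [H1|H1].
- apply thresh_case_iff in H1.
  replace (L * (a + 1) / a) with (c / a) in H by (unfold c; field; lra).
  assert (E : x / 2 + c / (a + x) - c / a = x * (a * (a + x) - 2 * c) / (2 * a * (a + x)))
    by (field; lra).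
  assert (0 <= x * (a * (a + x) - 2 * c) / (2 * a * (a + x))).
  { apply Rmult_le_pos; [apply Rmult_le_pos; nra|]. left; apply Rinv_0_lt_compat; nra. }
  lra.
- replace (2 * L * (a + 1)) with (2 * c) in H by (unfold c; ring).
  pose proof (sqrt_sqrt (2 * c) ltac:(lra)) as Es. set (r := sqrt (2 * c)) in *.
  assert (E : x / 2 + c / (a + x) - (r - a / 2) = (a + x - r) ^ 2 / (2 * (a + x)))
    by (replace c with (r * r / 2) by lra; field; lra).
  assert (0 <= (a + x - r) ^ 2 / (2 * (a + x))).
  { apply Rmult_le_pos; [apply pow2_ge_0|]. left; apply Rinv_0_lt_compat; nra. }
  lra.
Qed.

Lemma prox_obj_zero_min (w x : R) : 0 <= x -> w <= thresh L a ->
  prox_obj L a w 0 <= prox_obj L a w x.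
Proof.
intros Hx H. pose proof (thresh_le_min w x Hx H). pose proof c_pos.
unfold prox_obj. rewrite rho_0. unfold rho.
assert (E : / 2 * (x - w) ^ 2 + L * ((a + 1) * x / (a + x)) - (/ 2 * (0 - w) ^ 2 + L * 0)
          = x * (x / 2 + c / (a + x) - w)) by (unfold c; field; lra).
assert (0 <= x * (x / 2 + c / (a + x) - w)) by (apply Rmult_le_pos; lra).
lra.
Qed.

(* The cubic gives w = z - a + c a / z^2 for z = a + h(w); the gap then factors as
   (x - (z - a))^2 ((a + x) z^2 - 2 c a) / (2 (a + x) z^2), nonnegative since z^2 >= 2 c. *)
Lemma prox_obj_hfun_min (w x : R) : 0 <= x -> thresh L a < w ->
  prox_obj L a w (hfun L a w) <= prox_obj L a w x.
Proof.
intros Hx H. pose proof c_pos as Hc.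
destruct (hfun_cubic_root w H) as [Hq _]. destruct (hfun_root_bounds w H) as [Hz Hz2].
replace (hfun L a w) with ((a + hfun L a w) - a) by ring.
set (z := a + hfun L a w) in *.
assert (Hzp : 0 < z) by lra.
assert (Ew : w = z - a + c * a / z ^ 2).
{ unfold cubic in Hq. apply Rmult_eq_reg_r with (r := z ^ 2); [|apply pow_nonzero; lra].
  field_simplify; [|lra]. nra. }
rewrite Ew. unfold prox_obj, rho.
assert (E : / 2 * (x - (z - a + c * a / z ^ 2)) ^ 2 + L * ((a + 1) * x / (a + x))
         - (/ 2 * (z - a - (z - a + c * a / z ^ 2)) ^ 2 + L * ((a + 1) * (z - a) / (a + (z - a))))
         = (x - (z - a)) ^ 2 * ((a + x) * z ^ 2 - 2 * c * a) / (2 * (a + x) * z ^ 2)).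
{ unfold c. field. split; lra. }
assert (0 <= (x - (z - a)) ^ 2 * ((a + x) * z ^ 2 - 2 * c * a) / (2 * (a + x) * z ^ 2)).
{ apply Rmult_le_pos; [apply Rmult_le_pos; [apply pow2_ge_0|nra]|].
  left; apply Rinv_0_lt_compat. assert (0 < z ^ 2) by (apply pow_lt; lra). nra. }
lra.
Qed.

Lemma gfun_prox_min (w x : R) : 0 <= w -> 0 <= x ->
  prox_obj L a w (gfun L a w) <= prox_obj L a w x.
Proof.
intros Hw Hx. unfold gfun. rewrite (Rabs_right w) by lra.
destruct (Rle_dec w (thresh L a)) as [H|H].
- apply prox_obj_zero_min; auto.
- apply prox_obj_hfun_min; auto. lra.
Qed.

End ScalarProx.

Lemma vnorm_scal q (c : R) v : 0 <= c -> vnorm q (fun k => c * v k) = c * vnorm q v.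
Proof.
intros Hc. unfold vnorm.
rewrite (rsum_ext _ (fun k => c ^ 2 * v k ^ 2)) by (intros; ring).
rewrite rsum_scal_l, sqrt_mult_alt, sqrt_pow2 by (auto; apply pow2_ge_0). reflexivity.
Qed.

Lemma vnorm_eq0 q v : vnorm q v = 0 -> forall k, (k < q)%nat -> v k = 0.
Proof.
unfold vnorm. intros H. apply rsum_sqr_eq0.
rewrite (rsum_ext _ (fun k => v k ^ 2)) by (intros; ring).
apply sqrt_eq_0 in H; [lra|apply rsum_nonneg; intros; apply pow2_ge_0].
Qed.

Lemma matvec_scal p q A v (c : R) r : matvec p q A (fun k => c * v k) r = c * matvec p q A v r.
Proof. unfold matvec. rewrite <- rsum_scal_l. apply rsum_ext; intros; ring. Qed.

Lemma matvec_norm_le p q A normA v : is_spectral_norm p q A normA ->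
  vnorm p (matvec p q A v) <= normA * vnorm q v.
Proof.
intros [Hub _]. pose proof (sqrt_pos (rsum (fun k => v k ^ 2) q)) as HN. fold (vnorm q v) in HN.
destruct (Req_dec (vnorm q v) 0) as [E|E].
- rewrite E, Rmult_0_r. unfold vnorm at 1.
  rewrite rsum_zero, sqrt_0; [lra|]. intros r _. unfold matvec.
  rewrite rsum_zero; [ring|]. intros k Hk. rewrite (vnorm_eq0 q v E k Hk). ring.
- set (c := / vnorm q v).
  assert (Hc : 0 < c) by (apply Rinv_0_lt_compat; lra).
  assert (Hunit : vnorm q (fun k => c * v k) = 1) by (rewrite vnorm_scal by lra; unfold c; field; lra).
  pose proof (Hub _ (ex_intro _ _ (conj Hunit eq_refl))) as H.
  assert (Escal : vnorm p (matvec p q A (fun k => c * v k)) = c * vnorm p (matvec p q A v)).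
  { rewrite <- vnorm_scal by lra. unfold vnorm. f_equal.
    apply rsum_ext; intros. rewrite matvec_scal. reflexivity. }
  rewrite Escal in H. apply Rmult_le_compat_r with (r := vnorm q v) in H; [|lra].
  unfold c in H. replace (/ vnorm q v * vnorm p (matvec p q A v) * vnorm q v)
    with (vnorm p (matvec p q A v)) in H by (field; lra). exact H.
Qed.

Lemma rsum_sqr_vnorm q v : rsum (fun k => v k ^ 2) q = vnorm q v ^ 2.
Proof.
unfold vnorm. rewrite pow2_sqrt; [reflexivity|]. apply rsum_nonneg; intros; apply pow2_ge_0.
Qed.

Lemma vecm_entry m n X i j : (i < m)%nat -> vecm m n X (i + m * j)%nat = X i j.
Proof.
intros Hi. unfold vecm.
replace (i + m * j)%nat with (i + j * m)%nat by lia.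
rewrite Nat.Div0.mod_add, Nat.div_add by lia.
rewrite Nat.mod_small, Nat.div_small by lia. reflexivity.
Qed.

Lemma calA_sqr_le m n p A normA D : is_spectral_norm p (m * n) A normA ->
  rsum (fun r => calA m n p A D r ^ 2) p <= normA ^ 2 * frob m n D D.
Proof.
intros Hspec. pose proof (matvec_norm_le _ _ _ _ (vecm m n D) Hspec) as H.
assert (Hvec : rsum (fun k => vecm m n D k ^ 2) (m * n) = frob m n D D).
{ rewrite rsum_blocks, rsum_swap. unfold frob. apply rsum_ext; intros i Hi.
  apply rsum_ext; intros j Hj. rewrite vecm_entry by auto. ring. }
unfold calA. rewrite rsum_sqr_vnorm, <- Hvec, rsum_sqr_vnorm.
assert (0 <= vnorm p (matvec p (m * n) A (vecm m n D))) by apply sqrt_pos.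
assert (0 <= vnorm (m * n) (vecm m n D)) by apply sqrt_pos.
nra.
Qed.

Lemma calA_adjoint m n p A X y :
  rsum (fun r => calA m n p A X r * y r) p = frob m n X (calA_adj m n p A y).
Proof.
unfold calA, matvec, frob, calA_adj.
rewrite (rsum_ext _ (fun r => rsum (fun k => A r k * vecm m n X k * y r) (m * n)))
  by (intros; rewrite rsum_scal_r; reflexivity).
rewrite rsum_swap, rsum_blocks, rsum_swap.
apply rsum_ext; intros i Hi. apply rsum_ext; intros j Hj.
rewrite <- rsum_scal_l. apply rsum_ext; intros r _. rewrite vecm_entry by auto. ring.
Qed.

Lemma Bmu_gap mu m n p A b X i j :
  X i j - Bmu mu m n p A b X i j = mu * calA_adj m n p A (fun r => calA m n p A X r - b r) i j.
Proof.
unfold Bmu, calA_adj.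
rewrite (rsum_ext (fun r => A r (i + m * j)%nat * (b r - calA m n p A X r))
  (fun r => -1 * (A r (i + m * j)%nat * (calA m n p A X r - b r)))) by (intros; ring).
rewrite rsum_scal_l. ring.
Qed.

Lemma residual_sqr_expand m n p A b X Y :
  rsum (fun r => (calA m n p A Y r - b r) ^ 2) p =
  rsum (fun r => (calA m n p A X r - b r) ^ 2) p
  + 2 * frob m n (fun i j => Y i j - X i j) (calA_adj m n p A (fun r => calA m n p A X r - b r))
  + rsum (fun r => calA m n p A (fun i j => Y i j - X i j) r ^ 2) p.
Proof.
rewrite <- calA_adjoint, <- rsum_scal_l, <- !rsum_plus. apply rsum_ext; intros r _.
replace (calA m n p A Y r) with (calA m n p A X r + calA m n p A (fun i j => Y i j - X i j) r).
- ring.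
- unfold calA, matvec, vecm. rewrite <- rsum_plus. apply rsum_ext; intros; ring.
Qed.

(** * Singular value thresholding *)

Definition prox_objective (L a : R) (m n : nat) (B X : nat -> nat -> R) : R :=
  / 2 * frob m n (fun i j => X i j - B i j) (fun i j => X i j - B i j) + L * Tfun a m n X.

Section SvdThresholding.
Variables (m n : nat) (L a : R) (B U : nat -> nat -> R) (s : nat -> R) (V : nat -> nat -> R).
Hypotheses (Hmn : (m <= n)%nat) (Ha : 0 < a) (HL : 0 < L) (HB : is_svd m n B U s V).

Let g k := gfun L a (s k).

Lemma svd_thresholding_is_svd : is_svd m n (svd_mx m U g V) U g V.
Proof.
pose proof (svd_nonincr_nonneg _ _ _ _ _ _ HB) as [Hd Hn].
split; [exact (svd_orth_U _ _ _ _ _ _ HB)|split; [exact (svd_orth_V _ _ _ _ _ _ HB)|]].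
split; [|split].
- intros k Hk. apply gfun_nonneg; auto.
- intros k Hk. apply gfun_le; auto.
- intros i j _ _. reflexivity.
Qed.

Lemma prox_objective_svd_thresholding :
  prox_objective L a m n B (svd_mx m U g V) = rsum (fun k => prox_obj L a (s k) (g k)) m.
Proof.
unfold prox_objective, prox_obj.
rewrite (Tfun_svd _ _ _ _ _ _ _ svd_thresholding_is_svd).
rewrite (frob_ext m n _ (svd_mx m U (fun k => g k - s k) V) _ (svd_mx m U (fun k => g k - s k) V)).
- rewrite frob_svd_mx_same by (apply (svd_orth_U _ _ _ _ _ _ HB) || apply (svd_orth_V _ _ _ _ _ _ HB)).
  rewrite <- !rsum_scal_l, <- rsum_plus. apply rsum_ext; intros; ring.
- intros i j Hi Hj. rewrite (svd_entry _ _ _ _ _ _ HB) by auto.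
  unfold svd_mx. rewrite <- rsum_minus. apply rsum_ext; intros; ring.
- intros i j Hi Hj. rewrite (svd_entry _ _ _ _ _ _ HB) by auto.
  unfold svd_mx. rewrite <- rsum_minus. apply rsum_ext; intros; ring.
Qed.

(* With tau the singular values of X, von Neumann's inequality gives
   |X - B|^2 >= sum (tau_k - s_k)^2, which decouples into scalar problems. *)
Lemma prox_objective_ge X : rsum (fun k => prox_obj L a (s k) (g k)) m <= prox_objective L a m n B X.
Proof.
destruct (svd_exists m n X Hmn) as [UX [t [VX HX]]].
pose proof (svd_nonincr_nonneg _ _ _ _ _ _ HX) as [_ Ht].
pose proof (svd_nonincr_nonneg _ _ _ _ _ _ HB) as [_ Hs].
apply Rle_trans with (rsum (fun k => prox_obj L a (s k) (t k)) m).
{ apply rsum_le; intros k Hk. apply gfun_prox_min; auto. }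
unfold prox_objective. rewrite (Tfun_svd _ _ _ _ _ _ _ HX), frob_sqr_sub,
  (frob_svd_sqr _ _ _ _ _ _ HX), (frob_svd_sqr _ _ _ _ _ _ HB).
pose proof (frob_svd_le _ _ _ _ _ _ _ _ _ _ HX HB) as Hvn.
rewrite (rsum_ext _ (fun k => / 2 * (t k * t k) - / 2 * 2 * (t k * s k) + / 2 * (s k * s k)
  + L * rho a (t k))) by (intros; unfold prox_obj; ring).
rewrite !rsum_plus, rsum_minus, !rsum_scal_l. lra.
Qed.

End SvdThresholding.

Theorem mainTheorem4 (m n p : nat) (a lam mu : R)
  (A : nat -> nat -> R) (b : nat -> R) (normA : R) (Xs : nat -> nat -> R) :
  (m <= n)%nat -> 0 < a -> 0 < lam ->
  is_spectral_norm p (m * n) A normA ->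
  0 < mu -> mu * normA ^ 2 < 1 ->
  (forall X : nat -> nat -> R, objective a lam m n p A b Xs <= objective a lam m n p A b X) ->
  forall (U : nat -> nat -> R) (s : nat -> R) (V : nat -> nat -> R),
    is_svd m n (Bmu mu m n p A b Xs) U s V ->
    forall i j, (i < m)%nat -> (j < n)%nat ->
      Xs i j = rsum (fun k => U i k * gfun (lam * mu) a (s k) * V j k) m.
Proof.
intros Hmn Ha Hlam Hspec Hmu Hmu2 Hmin U s V Hsvd i j Hi Hj.
set (B := Bmu mu m n p A b Xs) in Hsvd.
set (Y := svd_mx m U (fun k => gfun (lam * mu) a (s k)) V).
change (rsum _ m) with (Y i j).
set (r0 := fun r => calA m n p A Xs r - b r).
set (D := fun i j => Y i j - Xs i j).
assert (Hprox : prox_objective (lam * mu) a m n B Y <= prox_objective (lam * mu) a m n B Xs).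
{ unfold Y. rewrite prox_objective_svd_thresholding by (auto; nra).
  apply (prox_objective_ge m n _ a B U s V); auto; nra. }
assert (HYB : frob m n (fun i j => Y i j - B i j) (fun i j => Y i j - B i j)
  = frob m n D D + 2 * (mu * frob m n D (calA_adj m n p A r0))
    + frob m n (fun i j => Xs i j - B i j) (fun i j => Xs i j - B i j)).
{ rewrite <- frob_scal_r.
  rewrite (frob_ext m n D D (fun i j => mu * calA_adj m n p A r0 i j) (fun i j => Xs i j - B i j))
    by (intros; first [reflexivity|symmetry; apply Bmu_gap]).
  rewrite <- frob_sqr_add. apply frob_ext; intros; unfold D; ring. }
assert (Hobj := Hmin Y). unfold objective in Hobj.
rewrite (residual_sqr_expand m n p A b Xs Y) in Hobj. fold r0 D in Hobj.
pose proof (calA_sqr_le m n p A normA D Hspec) as HAD.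
unfold prox_objective in Hprox. rewrite HYB in Hprox.
assert (HD : frob m n D D * (1 - mu * normA ^ 2) <= 0).
{ pose proof (Rmult_le_compat_l mu _ _ ltac:(lra) HAD). nra. }
assert (HD0 : frob m n D D <= 0) by (pose proof (frob_nonneg m n D); nra).
pose proof (frob_eq0 m n D HD0 i j Hi Hj). unfold D in *. lra.
Qed.
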